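(* Let $\mathcal{A}$ be a (finite) activation algebra and $M$ a finite set of morphisms of $\mathcal{T}_\mathcal{A}$. If $\tau\in M^\omega$ has an accepting run $(\Theta_i,\sigma_i)_{i\in\omega}$, then $\tau$ describes a path through $\mathcal{T}_\mathcal{A}$ which satisfies the trace condition of $\mathcal{T}_\mathcal{A}$.
   Context: An activation algebra $\mathcal{A}=(A,\le,\vee,0,\alpha)$ is a finite join-semilattice $(A,\le,\vee)$ with least element $0$, together with a distinguished element $\alpha\in A$ with $\alpha\neq 0$. The category $\mathcal{T}_\mathcal{A}$ has the finite sets as objects; a morphism $R\colon X\to Y$ is a relation $R\subseteq X\times A\times Y$; the composite of $R\colon X\to Y$ and $R'\colon Y\to Z$ is $R'\circ R=\{(x,c,z)\mid \exists y\in Y,\ a,b\in A:\ (x,a,y)\in R,\ (y,b,z)\in R',\ a\vee b=c\}$, and the identity is $1_X=\{(x,0,x)\mid x\in X\}$. A sequence $\tau\in M^\omega$ of morphisms describes a path if $\mathrm{cod}(\tau_i)=\mathrm{dom}(\tau_{i+1})$ for all $i$; write $P(n<m)=\tau_{m-1}\circ\cdots\circ\tau_n$ for $n<m$. Such a path satisfies the trace condition if there exist a strictly increasing sequence $k_0<k_1<\cdots$ of natural numbers and elements $s_i\in\mathrm{dom}(\tau_{k_i})$ with $(s_i,\alpha,s_{i+1})\in P(k_i<k_{i+1})$ for all $i$. Safra boards. Fix a countable set $\mathcal{C}\supseteq\omega$ of chips. A Safra board on $\mathcal{A}$ and a finite set $X$ is a pair $(\Theta,\sigma)$ where the control $\Theta\subseteq\mathcal{C}$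 is a finite set with a linear order $\le$, and $\sigma\colon X\times A\to\mathcal{P}(\mathcal{P}(\Theta))$, such that every $\gamma\in\Theta$ belongs to some $S\in\sigma(x,a)$. The elements $S\in\sigma(x,a)$ are called stacks (bottom = $\le$-least, top = $\le$-greatest element). A chip $\gamma\in\Theta$ is covered if it is not the top element of any stack $S\in\sigma(x,a)$, for any $x,a$. Transitions between boards: (i) $\tau$-successor, for $\tau\colon X\to Y$, written $(\Theta,\sigma)\xrightarrow{\tau}(\Theta',\sigma')$: first let $\sigma^*(y,a)=\{S\mid S\in\sigma(x,b)\text{ for some }x\in X,b\in A, c\in A \text{ with }(x,c,y)\in\tau\text{ and }a=b\vee c\}$ and let $\Theta^*$ be the set of chips occurring in some stack of $\sigma^*$, with the order inherited from $\Theta$. Then choose a finite linearly ordered $\Theta^\circ\subseteq\mathcal{C}\setminus\Theta$ and a bijection $\iota$ from $\{y\in Y\mid\sigma^*(y,\alpha)\neq\emptyset\}$ onto $\Theta^\circ$, and set $\sigma'(y,\alpha)=\emptyset$, $\sigma'(y,0)=\sigma^*(y,0)\cup\{S\cup\{\iota(y)\}\mid S\in\sigma^*(y,\alpha)\}$, $\sigma'(y,a)=\sigma^*(y,a)$ for $a\notin\{0,\alpha\}$, and $\Theta'=\Theta^*\oplus\Theta^\circ$ (concatenation: all elements of $\Theta^*$ below all elements of $\Theta^\circ$). (ii) Weakening $(\Theta,\sigma)\xrightarrow{W}(\Theta',\sigma')$: a board on the same set with $\sigma'(x,a)\subseteq\sigma(x,a)$ for all $x,a$ and $\Theta'\subseteq\Theta$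 (induced order) the set of chips still occurring in stacks of $\sigma'$. (iii) $\gamma$-reset for a covered $\gamma\in\Theta$, $(\Theta,\sigma)\xrightarrow{R_\gamma}(\Theta',\sigma')$: for a stack $S$ let $S{\upharpoonright}\gamma=\{z\in S\mid z\le\gamma\}$ if $\gamma\in S$ and $S{\upharpoonright}\gamma=S$ otherwise; $\sigma'(x,a)=\{S{\upharpoonright}\gamma\mid S\in\sigma(x,a)\}$, and $\Theta'$ is the set of chips occurring in stacks of $\sigma'$. (iv) Population $(\Theta,\sigma)\xrightarrow{P}(\Theta,\sigma')$: $\sigma(x,0)\subseteq\sigma'(x,0)\subseteq\sigma(x,0)\cup\{\emptyset\}$ for all $x$ and $\sigma'(x,a)=\sigma(x,a)$ for $a\neq 0$. A run of $\tau\in M^\omega$ is a sequence $(\Theta_i,\sigma_i)_{i\in\omega}$ of boards together with a strictly monotone $\iota\colon\omega\to\omega$ such that for $i=\iota(n)$ one has $(\Theta_i,\sigma_i)\xrightarrow{\tau_n}(\Theta_{i+1},\sigma_{i+1})$, and for $i$ not in the image of $\iota$ the step $(\Theta_i,\sigma_i)\to(\Theta_{i+1},\sigma_{i+1})$ is a weakening, a population, or a $\gamma$-reset for some $\gamma\in\Theta_i$. A run is accepting if there are $N\in\omega$ and $\gamma\in\bigcap_{n\ge N}\Theta_n$ such that the step from index $i$ to $i+1$ is a $\gamma$-reset for infinitely many $i$. *)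

From HB Require Import structures.
From mathcomp Require Import all_boot.
From mathcomp Require Export finmap.
Set Implicit Arguments. Unset Strict Implicit. Unset Printing Implicit Defensive.
Local Open Scope fset_scope.

Record activation_algebra := ActAlg {
  aa_carrier :> finType;
  aa_join : aa_carrier -> aa_carrier -> aa_carrier;
  aa_zero : aa_carrier;
  aa_alpha : aa_carrier;
  aa_joinA : forall x y z, aa_join x (aa_join y z) = aa_join (aa_join x y) z;
  aa_joinC : forall x y, aa_join x y = aa_join y x;
  aa_joinxx : forall x, aa_join x x = x;
  aa_join0x : forall x, aa_join aa_zero x = x;
  aa_alpha_neq0 : aa_alpha <> aa_zero }.

Definition aa_le (A : activation_algebra) (x y : A) : Prop := aa_join x y = y.

Section Defs.
Variables (V : choiceType) (A : activation_algebra).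

(* Objects of T_A: finite sets (finite subsets of the universe V).
   A morphism R : X -> Y is a relation R ⊆ X × A × Y. *)
Record morph := Morph {
  mdom : {fset V};
  mcod : {fset V};
  mrel : V -> A -> V -> Prop;
  mrel_sub : forall x a y, mrel x a y -> x \in mdom /\ y \in mcod }.

(* Composite R' ∘ R (first R, then R'). *)
Definition comp_rel (R R' : V -> A -> V -> Prop) : V -> A -> V -> Prop :=
  fun x c z => exists y a b, R x a y /\ R' y b z /\ aa_join a b = c.

Definition describes_path (tau : nat -> morph) : Prop :=
  forall i, mcod (tau i) = mdom (tau i.+1).

Fixpoint Pseg (tau : nat -> morph) (n l : nat) : V -> A -> V -> Prop :=
  match l with
  | 0 => mrel (tau n)
  | l'.+1 => comp_rel (Pseg tau n l') (mrel (tau (addn n l'.+1)))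
  end.

(* P(n < m) = tau_{m-1} ∘ ... ∘ tau_n  (meaningful for n < m) *)
Definition Ppath (tau : nat -> morph) (n m : nat) := Pseg tau n (subn m n).-1.

Definition trace_condition (tau : nat -> morph) : Prop :=
  exists (k : nat -> nat) (s : nat -> V),
    (forall i, k i < k i.+1) /\
    (forall i, s i \in mdom (tau (k i))) /\
    (forall i, Ppath tau (k i) (k i.+1) (s i) (aa_alpha A) (s i.+1)).

(* The control Theta is a duplicate-free
   sequence (its linear order is the list order); sigma maps (x, a) to a
   finite set of stacks, each stack a finite set of chips. *)
Variable C : countType.

Record board := Board {
  theta : seq C;
  sigma : V -> A -> {fset {fset C}} }.

Definition valid_board (X : {fset V}) (B : board) : Prop :=
  uniq (theta B) /\
  (forall x a, x \notin X -> sigma B x a = fset0) /\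
  (forall x a S g, S \in sigma B x a -> g \in S -> g \in theta B) /\
  (forall g, g \in theta B -> exists x a S, S \in sigma B x a /\ g \in S).

Definition occurs_in (st : V -> A -> {fset C} -> Prop) (g : C) : Prop :=
  exists x a S, st x a S /\ g \in S.

Definition inherits (Th Th' : seq C) (P : C -> Prop) : Prop :=
  subseq Th' Th /\ forall g, g \in Th' <-> P g.

Definition is_top (Th : seq C) (g : C) (S : {fset C}) : Prop :=
  g \in S /\ forall d, d \in S -> index d Th <= index g Th.

Definition covered (B : board) (g : C) : Prop :=
  forall x a S, S \in sigma B x a -> ~ is_top (theta B) g S.

Definition trunc (Th : seq C) (g : C) (S : {fset C}) : {fset C} :=
  if g \in S then [fset z in S | index z Th <= index g Th] else S.

Definition sigma_star (t : morph) (B : board) : V -> A -> {fset C} -> Prop :=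
  fun y a S => exists x b c, mrel t x c y /\ a = aa_join b c /\ S \in sigma B x b.

Definition succ_step (t : morph) (B B' : board) : Prop :=
  let st := sigma_star t B in
  let al := aa_alpha A in
  let z := aa_zero A in
  exists (ts thetao : seq C) (iota : V -> C),
    inherits (theta B) ts (occurs_in st) /\
    uniq thetao /\ (forall g, g \in thetao -> g \notin theta B) /\
    (forall y, y \in mcod t -> (exists S, st y al S) -> iota y \in thetao) /\
    (forall y1 y2, y1 \in mcod t -> (exists S, st y1 al S) ->
                   y2 \in mcod t -> (exists S, st y2 al S) ->
                   iota y1 = iota y2 -> y1 = y2) /\
    (forall g, g \in thetao ->
       exists y, [/\ y \in mcod t, (exists S, st y al S) & iota y = g]) /\
    theta B' = ts ++ thetao /\
    (forall y S, S \in sigma B' y al <-> False) /\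
    (forall y S, S \in sigma B' y z <->
       (st y z S \/ exists S0, st y al S0 /\ S = S0 `|` [fset iota y])) /\
    (forall y a S, a <> al -> a <> z -> (S \in sigma B' y a <-> st y a S)).

Definition weak_step (B B' : board) : Prop :=
  (forall x a, sigma B' x a `<=` sigma B x a) /\
  inherits (theta B) (theta B') (occurs_in (fun x a S => S \in sigma B' x a)).

Definition reset_step (g : C) (B B' : board) : Prop :=
  g \in theta B /\ covered B g /\
  (forall x a S', S' \in sigma B' x a <->
      exists S, S \in sigma B x a /\ S' = trunc (theta B) g S) /\
  inherits (theta B) (theta B') (occurs_in (fun x a S => S \in sigma B' x a)).

Definition pop_step (B B' : board) : Prop :=
  theta B' = theta B /\
  (forall x, sigma B x (aa_zero A) `<=` sigma B' x (aa_zero A) /\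
             sigma B' x (aa_zero A) `<=` sigma B x (aa_zero A) `|` [fset fset0]) /\
  (forall x a, a <> aa_zero A -> sigma B' x a = sigma B x a).

Definition is_run (tau : nat -> morph) (Bs : nat -> board) (iota : nat -> nat)
    (Xs : nat -> {fset V}) : Prop :=
  (forall n, iota n < iota n.+1) /\
  (forall i, valid_board (Xs i) (Bs i)) /\
  (forall n, Xs (iota n) = mdom (tau n) /\ Xs (iota n).+1 = mcod (tau n) /\
             succ_step (tau n) (Bs (iota n)) (Bs (iota n).+1)) /\
  (forall i, (forall n, iota n <> i) ->
     Xs i.+1 = Xs i /\
     (weak_step (Bs i) (Bs i.+1) \/ pop_step (Bs i) (Bs i.+1) \/
      exists g, reset_step g (Bs i) (Bs i.+1))).

Definition accepting (Bs : nat -> board) (iota : nat -> nat) : Prop :=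
  exists (N : nat) (g : C),
    (forall n, N <= n -> g \in theta (Bs n)) /\
    (forall m, exists i, m <= i /\ (forall n, iota n <> i) /\
                         reset_step g (Bs i) (Bs i.+1)).

End Defs.

From HB Require Import structures.
From mathcomp Require Import all_boot.
From mathcomp Require Import finmap.
From Stdlib Require Lists.List.
From Stdlib Require Import Classical ClassicalEpsilon.
Set Implicit Arguments. Unset Strict Implicit. Unset Printing Implicit Defensive.
Local Open Scope fset_scope.

(* Fix a chip g that is eventually always present and reset infinitely often.
   The stacks containing g form a finitely branching graph in which every such
   stack descends from one at the previous step, so by König's lemma there is
   an infinite chain of them.  Along the chain the stack only shrinks, except
   at an alpha-promotion of a successor step, where it gains a fresh chip and
   its label drops to 0; in between, its label is the composite of the
   morphisms read so far.  Promotions recur: without one between two resets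
   of g, the chip above g at the second reset would already lie in the stack
   truncated at g by the first reset, hence below g, while chips never change
   their relative order.  Consecutive promotions thus delimit alpha-labelled
   segments of the path. *)

Lemma index_subseq_leq (T : eqType) (s1 s2 : seq T) x y :
  uniq s2 -> subseq s1 s2 -> x \in s1 -> y \in s1 ->
  (index x s1 <= index y s1) = (index x s2 <= index y s2).
Proof.
elim: s2 s1 => [|z s2 IH] [|w s1] //=.
move=> /andP[zn us2]; case: eqP => [<-|wz] hs.
- rewrite !inE => hx hy.
  case: (eqVneq w x) => [->|zx] //=; case: (eqVneq w y) => [ey|zy] //=.
  rewrite !ltnS; apply: IH => //.
  + by move: hx; rewrite eq_sym (negbTE zx).
  + by move: hy; rewrite eq_sym (negbTE zy).
- move=> hx hy.
  have hx2 := mem_subseq hs hx; have hy2 := mem_subseq hs hy.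
  have zx : z != x by apply: contraNneq zn => ->.
  have zy : z != y by apply: contraNneq zn => ->.
  rewrite (negbTE zx) (negbTE zy) ltnS.
  exact: (IH (w :: s1) us2 hs hx hy).
Qed.

Lemma fsubset_trunc (K : countType) (Th : seq K) g (S : {fset K}) :
  trunc Th g S `<=` S.
Proof.
by rewrite /trunc; case: ifP => _ //; apply/fsubsetP => d; rewrite inE => /andP[].
Qed.

Lemma antitone_pigeonhole (T : eqType) (s : seq T) (P : T -> nat -> Prop) :
  (forall x d d', d <= d' -> P x d' -> P x d) ->
  (forall d, exists2 x, x \in s & P x d) ->
  exists2 x, x \in s & forall d, P x d.
Proof.
move=> anti; elim: s => [|y s IH] hall; first by have [] := hall 0.
case: (classic (forall d, P y d)) => hy; first by exists y; rewrite ?inE ?eqxx.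
have [d0 hd0] := not_all_ex_not _ _ hy.
have [|x hx hP] := IH; last by exists x; rewrite // inE hx orbT.
move=> d; have [x] := hall (maxn d d0).
rewrite inE => /orP[/eqP ->|hx] hP.
  by case: hd0; apply: anti hP; exact: leq_maxr.
by exists x => //; apply: anti hP; exact: leq_maxl.
Qed.

Section Koenig.
Variables (T : eqType) (level : nat -> T -> Prop) (edge : nat -> T -> T -> Prop).
Variable members : nat -> seq T.
Hypothesis level_members : forall i u, level i u -> u \in members i.
Hypothesis edge_level : forall i u v, edge i u v -> level i u.
Hypothesis level_pred : forall i v, level i.+1 v -> exists u, edge i u v.
Hypothesis level_inhabited : forall i, exists u, level i u.

Fixpoint extends i u d : Prop :=
  if d is d'.+1 then exists2 v, edge i u v & extends i.+1 v d' else level i u.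

Lemma extends_level i u d : extends i u d -> level i u.
Proof. by case: d => [|d] //= [v /edge_level]. Qed.

Lemma extends_antitone i u d d' : d <= d' -> extends i u d' -> extends i u d.
Proof.
elim: d i u d' => [|d IH] i u d' hd h; first exact: extends_level h.
case: d' hd h => [|d'] //= hd [v huv hv]; exists v => //; exact: IH hv.
Qed.

Lemma extends_from_level d i w : level (i + d) w -> exists u, extends i u d.
Proof.
elim: d i w => [|d IH] i w; first by rewrite addn0 => hw; exists w.
rewrite addnS -addSn => /IH [v hv].
have [u huv] := level_pred (extends_level hv).
by exists u; exists v.
Qed.

Definition unbounded i u := forall d, extends i u d.

Lemma unbounded_root : exists u, unbounded 0 u.
Proof.
have cofinal d : exists2 u, u \in members 0 & extends 0 u d.
  have [w hw] := level_inhabited d.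
  have [u hu] := @extends_from_level d 0 w hw.
  by exists u => //; exact: level_members (extends_level hu).
have [u _ hu] := antitone_pigeonhole (@extends_antitone 0) cofinal.
by exists u.
Qed.

Lemma unbounded_next i u : unbounded i u -> exists v, edge i u v /\ unbounded i.+1 v.
Proof.
move=> hu.
have anti v d d' : d <= d' -> edge i u v /\ extends i.+1 v d' ->
    edge i u v /\ extends i.+1 v d.
  by move=> hd [huv hv]; split=> //; exact: extends_antitone hv.
have cofinal d : exists2 v, v \in members i.+1 & edge i u v /\ extends i.+1 v d.
  have [v huv hv] := hu d.+1.
  by exists v => //; exact: level_members (extends_level hv).
have [v _ hv] := antitone_pigeonhole anti cofinal.
by exists v; split=> [|d]; [case: (hv 0) | case: (hv d)].
Qed.

Lemma koenig : exists Q : nat -> T, forall i, edge i (Q i) (Q i.+1).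
Proof.
have [u0 hu0] := unbounded_root.
have total (iu : nat * T) : exists v,
    unbounded iu.1 iu.2 -> edge iu.1 iu.2 v /\ unbounded iu.1.+1 v.
  case: iu => i u; case: (classic (unbounded i u)) => [/unbounded_next [v hv]|hu].
    by exists v.
  by exists u => /hu.
have [next hnext] := choice _ total.
pose Q := fix Q i := if i is i'.+1 then next (i', Q i') else u0.
have hQ i : unbounded i (Q i) by elim: i => //= i IH; have [] := hnext (i, Q i) IH.
by exists Q => i; exact: (hnext (i, Q i) (hQ i)).1.
Qed.

End Koenig.

Lemma enum_infinite (p : pred nat) : (forall m, exists n, (m < n) && p n) ->
  exists e : nat -> nat,
    forall j, [/\ p (e j), e j < e j.+1 & forall n, e j < n < e j.+1 -> ~~ p n].
Proof.
move=> hinf; pose next m := ex_minn (hinf m).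
have hnext m : [/\ p (next m), m < next m & forall n, m < n < next m -> ~~ p n].
  rewrite /next; case: (ex_minnP (hinf m)) => n /andP[hmn hn] hmin.
  split=> // k /andP[hmk hkn].
  by apply/negP => hk; have := hmin k; rewrite hmk hk leqNgt hkn => /(_ isT).
exists (fun j => iter j.+1 next 0) => j.
by have [hp _ _] := hnext (iter j next 0); have [_ hlt hgap] := hnext (iter j.+1 next 0).
Qed.

Definition Ppath_or_id (V : choiceType) (A : activation_algebra) (tau : nat -> morph V A)
    (k p : nat) (s : V) (b : A) (x : V) : Prop :=
  (p = k /\ x = s /\ b = aa_zero A) \/ (k < p /\ Ppath tau k p s b x).

Lemma Ppath_snoc (V : choiceType) (A : activation_algebra) (tau : nat -> morph V A)
    k p s b x c y :
  Ppath_or_id tau k p s b x -> mrel (tau p) x c y -> Ppath tau k p.+1 s (aa_join b c) y.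
Proof.
case=> [[-> [-> ->]]|[hkp hP]] hm; first by rewrite /Ppath subSnn /= aa_join0x.
move: hP; rewrite /Ppath subSn ?(ltnW hkp) //.
have e : p - k = (p - k).-1.+1 by rewrite prednK // subn_gt0.
rewrite e /= => hP.
by exists x, b, c; rewrite -e subnKC ?(ltnW hkp).
Qed.

Section Run.
Variables (V : choiceType) (A : activation_algebra) (C : countType).
Variables (tau : nat -> morph V A) (Bs : nat -> board V A C).
Variables (io : nat -> nat) (Xs : nat -> {fset V}).
Hypothesis run : is_run tau Bs io Xs.

Local Notation al := (aa_alpha A).
Local Notation z0 := (aa_zero A).
Local Notation th i := (theta (Bs i)).

Definition extra_step i := forall n, io n <> i.

Lemma io_homo : {homo io : m n / m < n}.
Proof. by apply: homo_ltn ltn_trans _; case: run. Qed.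

Lemma io_leq : {mono io : m n / m <= n}.
Proof. exact: leq_mono io_homo. Qed.

Lemma io_ltn : {mono io : m n / m < n}.
Proof. exact: leqW_mono io_leq. Qed.

Lemma io_inj : injective io.
Proof. exact: incn_inj io_leq. Qed.

Lemma extra_stepP i : (exists n, io n = i) \/ extra_step i.
Proof.
case: (classic (exists n, io n = i)) => [|hn]; [by left | right=> n e].
by apply: hn; exists n.
Qed.

Lemma extra_between m i : io m < i -> i < io m.+1 -> extra_step i.
Proof.
move=> h1 h2 n e; subst i.
by case: (leqP n m) => hnm; move: (hnm); rewrite -io_leq leqNgt ?h1 ?h2.
Qed.

Lemma run_valid i : valid_board (Xs i) (Bs i).
Proof. by case: run => _ []. Qed.

Lemma run_succ n : [/\ Xs (io n) = mdom (tau n), Xs (io n).+1 = mcod (tau n) &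
  succ_step (tau n) (Bs (io n)) (Bs (io n).+1)].
Proof. by case: run => _ [_ [/(_ n) [? [? ?]] _]]. Qed.

Lemma run_extra i : extra_step i -> Xs i.+1 = Xs i /\
  (weak_step (Bs i) (Bs i.+1) \/ pop_step (Bs i) (Bs i.+1) \/
   exists h, reset_step h (Bs i) (Bs i.+1)).
Proof. by case: run => _ [_ [_ /(_ i)]]. Qed.

Lemma stack_in_theta i x a S d : S \in sigma (Bs i) x a -> d \in S -> d \in th i.
Proof. by have [_ [_ [h _]]] := run_valid i; exact: h. Qed.

Lemma Xs_extra_const i j : i <= j -> (forall k, i <= k < j -> extra_step k) -> Xs j = Xs i.
Proof.
elim: j => [|j IH]; first by rewrite leqn0 => /eqP ->.
rewrite leq_eqVlt => /orP[/eqP -> _ //|hij] hext.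
have hj : i <= j < j.+1 by rewrite -ltnS hij ltnSn.
have [-> _] := run_extra (hext j hj).
by apply: IH => // k /andP[hik hkj]; apply: hext; rewrite hik ltnS (ltnW hkj).
Qed.

Lemma run_describes_path : describes_path tau.
Proof.
move=> n; have [_ <- _] := run_succ n; have [<- _ _] := run_succ n.+1.
apply/esym/Xs_extra_const => [|k /andP[]]; first exact: io_homo (ltnSn n).
exact: extra_between.
Qed.

Lemma theta_order_step i d e :
  d \in th i -> e \in th i -> d \in th i.+1 -> e \in th i.+1 ->
  (index d (th i) <= index e (th i)) = (index d (th i.+1) <= index e (th i.+1)).
Proof.
move=> hd he hd' he'; have [hu _] := run_valid i.
case: (extra_stepP i) => [[n hn]|hext]; last first.
  have [_ [[_ hinh]|[[-> _]|[h [_ [_ [_ hinh]]]]]]] := run_extra hext => //;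
  by rewrite (index_subseq_leq hu hinh.1).
subst i; have [_ _ [ts [tho [_ [hinh [_ [hfresh [_ [_ [_ [hth _]]]]]]]]]]] := run_succ n.
move: hd' he'; rewrite hth => hd' he'.
have old c : c \in th (io n) -> c \in ts ++ tho -> c \in ts.
  by move=> hc; rewrite mem_cat => /orP[//|/hfresh]; rewrite hc.
rewrite !index_cat (old d) // (old e) //.
by rewrite (index_subseq_leq hu hinh.1) // ?(old d) ?(old e).
Qed.

Lemma theta_order i j d e : i <= j ->
  (forall k, i <= k <= j -> d \in th k /\ e \in th k) ->
  (index d (th i) <= index e (th i)) = (index d (th j) <= index e (th j)).
Proof.
elim: j => [|j IH]; first by rewrite leqn0 => /eqP ->.
rewrite leq_eqVlt => /orP[/eqP -> _ //|hij] hin.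
have [hdj hej] : d \in th j /\ e \in th j by apply: hin; rewrite -ltnS hij leqnSn.
have [hdj' hej'] : d \in th j.+1 /\ e \in th j.+1 by apply: hin; rewrite (ltnW hij) leqnn.
rewrite IH // -?theta_order_step // => k /andP[hik hkj]; apply: hin.
by rewrite hik (leqW hkj).
Qed.

Section GStacks.
Variables (N : nat) (g : C).
Hypothesis g_theta : forall n, N <= n -> g \in th n.

Definition node := (V * A * {fset C})%type.

Definition gstack i (u : node) := u.2 \in sigma (Bs i) u.1.1 u.1.2 /\ g \in u.2.

(* The stack [S'] at [(y, a)] on board [i.+1] stems from [S] at [(x, b)] on board [i]. *)
Definition descends i x b (S : {fset C}) y a (S' : {fset C}) :=
  (forall n, io n = i -> exists c, mrel (tau n) x c y /\
     ((a = aa_join b c /\ S' `<=` S) \/ [/\ aa_join b c = al, a = z0 & ~~ (S' `<=` S)])) /\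
  (extra_step i -> [/\ y = x, a = b, S' `<=` S &
     (reset_step g (Bs i) (Bs i.+1) -> S' = trunc (th i) g S)]).

Definition lineage i (u v : node) :=
  [/\ gstack i u, gstack i.+1 v & descends i u.1.1 u.1.2 u.2 v.1.1 v.1.2 v.2].

Lemma descends_succ n x b S y a S' c : mrel (tau n) x c y ->
  (a = aa_join b c /\ S' `<=` S) \/ [/\ aa_join b c = al, a = z0 & ~~ (S' `<=` S)] ->
  descends (io n) x b S y a S'.
Proof. by move=> hm h; split=> [n' /io_inj -> | hext]; [exists c | case: (hext n)]. Qed.

Lemma descends_extra i x a S S' : extra_step i -> S' `<=` S ->
  (reset_step g (Bs i) (Bs i.+1) -> S' = trunc (th i) g S) -> descends i x a S x a S'.
Proof. by move=> hext hsub hres; split=> [n /hext|_]. Qed.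

Lemma gstack_pred_succ n v : N <= io n -> gstack (io n).+1 v ->
  exists u, lineage (io n) u v.
Proof.
case: v => [[y a] S'] hN [/= hS' hgS'].
have [_ _ [ts [tho [fresh [_ [_ [hfresh [hio [_ [_ [_ [hal [hz hother]]]]]]]]]]]]] :=
  run_succ n.
have inherited : sigma_star (tau n) (Bs (io n)) y a S' ->
    exists u, lineage (io n) u (y, a, S').
  case=> x [b [c [hm [ha hS]]]]; exists (x, b, S'); split=> //.
  by apply: descends_succ hm _; left; rewrite fsubset_refl.
case: (eqVneq a al) => [ea|/eqP hnal]; first by case: (hal y S'); rewrite -ea.
case: (eqVneq a z0) => [ea|/eqP hnz]; last exact/inherited/(hother y a S' hnal hnz).1.
subst a; case: ((hz y S').1 hS') => [|[S0 [hst eS]]]; first exact: inherited.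
case: (hst) => x [b [c [hm [hjoin hS0]]]].
have new : fresh y \notin th (io n).
  by apply/hfresh/hio; [exact: (mrel_sub hm).2 | exists S0].
have hgS0 : g \in S0.
  move: hgS'; rewrite eS => /fsetUP[//|]; rewrite inE => /eqP hg.
  by move: new; rewrite -hg g_theta.
exists (x, b, S0); split=> //; apply: descends_succ hm _; right; split=> //.
apply/negP => hsub; have : fresh y \in S0.
  by apply: (fsubsetP hsub); rewrite eS !inE eqxx orbT.
by move/(stack_in_theta hS0); rewrite (negbTE new).
Qed.

Lemma gstack_pred_extra i v : extra_step i -> gstack i.+1 v -> exists u, lineage i u v.
Proof.
case: v => [[y a] S'] hext [/= hS' hgS'].
have from_stack S : S \in sigma (Bs i) y a -> S' `<=` S ->
    (reset_step g (Bs i) (Bs i.+1) -> S' = trunc (th i) g S) ->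
    exists u, lineage i u (y, a, S').
  move=> hS hsub hres; exists (y, a, S); split=> //; last exact: descends_extra.
  by split=> //; exact: (fsubsetP hsub).
have from_reset h : reset_step h (Bs i) (Bs i.+1) ->
    exists S, S \in sigma (Bs i) y a /\ S' = trunc (th i) h S.
  by case=> _ [_ [hiff _]]; exact: (hiff y a S').1.
case: (classic (reset_step g (Bs i) (Bs i.+1))) => hres.
  have [S [hS eS]] := from_reset g hres.
  by apply: (from_stack S) => //; rewrite eS fsubset_trunc.
have keep : S' \in sigma (Bs i) y a -> exists u, lineage i u (y, a, S').
  by move=> hS; apply: (from_stack S') => // /hres.
have [_ [[hsub _]|[[_ [hpop0 hpop]]|[h /from_reset [S [hS eS]]]]]] := run_extra hext.
- exact/keep/(fsubsetP (hsub y a)).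
- case: (eqVneq a z0) => [ea|/eqP hnz]; last by apply: keep; rewrite -hpop.
  subst a; have /fsetUP[|] := fsubsetP (hpop0 y).2 _ hS'; first exact: keep.
  by rewrite inE => /eqP eS; move: hgS'; rewrite eS inE.
- by apply: (from_stack S hS); [rewrite eS fsubset_trunc | move/hres].
Qed.

Lemma gstack_pred i v : N <= i -> gstack i.+1 v -> exists u, lineage i u v.
Proof.
case: (extra_stepP i) => [[n <-]|hext _]; last exact: gstack_pred_extra.
exact: gstack_pred_succ.
Qed.

Definition stacks i : seq node :=
  flatten [seq flatten [seq [seq (x, a, St) | St <- enum_fset (sigma (Bs i) x a)]
    | a <- enum A] | x <- enum_fset (Xs i)].

Lemma gstack_stacks i u : gstack i u -> u \in stacks i.
Proof.
case: u => [[x a] S] [/= hS _].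
have hx : x \in Xs i.
  apply: contraT => hx; have [_ [hout _]] := run_valid i.
  by move: hS; rewrite hout // inE.
apply/flatten_mapP; exists x => //; apply/flatten_mapP; exists a; first exact: mem_enum.
by apply/mapP; exists S.
Qed.

Lemma gstack_exists i : N <= i -> exists u, gstack i u.
Proof.
move=> hN; have [_ [_ [_ hcov]]] := run_valid i.
by have [x [a [S hS]]] := hcov g (g_theta hN); exists (x, a, S).
Qed.

Lemma lineage_path : exists Q : nat -> node, forall t, N <= t -> lineage t (Q t) (Q t.+1).
Proof.
have pred i v : gstack (N + i.+1) v -> exists u, lineage (N + i) u v.
  by rewrite addnS; apply: gstack_pred; rewrite leq_addr.
have [Q hQ] := @koenig _ (fun i => gstack (N + i)) (fun i => lineage (N + i))
  (fun i => stacks (N + i)) (fun i => @gstack_stacks (N + i))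
  (fun i u v h => let: And3 hu _ _ := h in hu) pred
  (fun i => gstack_exists (leq_addr i N)).
exists (fun t => Q (t - N)) => t hN.
by have := hQ (t - N); rewrite subnKC // -subSn.
Qed.

Section Path.
Hypothesis g_resets : forall m, exists i, m <= i /\ extra_step i /\
  reset_step g (Bs i) (Bs i.+1).
Variable Q : nat -> node.
Hypothesis Q_lineage : forall t, N <= t -> lineage t (Q t) (Q t.+1).

Local Notation xq t := (Q t).1.1.
Local Notation aq t := (Q t).1.2.
Local Notation Sq t := (Q t).2.

Definition grows t := ~~ (Sq t.+1 `<=` Sq t).

Lemma path_gstack t : N <= t -> gstack t (Q t).
Proof. by case/Q_lineage. Qed.

Lemma path_extra t : N <= t -> extra_step t ->
  [/\ xq t.+1 = xq t, aq t.+1 = aq t, Sq t.+1 `<=` Sq t &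
      (reset_step g (Bs t) (Bs t.+1) -> Sq t.+1 = trunc (th t) g (Sq t))].
Proof. by move=> hN hext; have [_ _ [_ /(_ hext)]] := Q_lineage hN. Qed.

Lemma path_succ n : N <= io n -> exists c, mrel (tau n) (xq (io n)) c (xq (io n).+1) /\
  if grows (io n) then aa_join (aq (io n)) c = al /\ aq (io n).+1 = z0
  else aq (io n).+1 = aa_join (aq (io n)) c.
Proof.
move=> hN; have [_ _ [/(_ n erefl) [c [hm hlab]]] _] := Q_lineage hN.
exists c; split=> //; rewrite /grows.
by case: hlab => [[-> ->]|[-> -> ->]].
Qed.

Lemma grows_succ t : N <= t -> grows t -> exists n, io n = t.
Proof.
move=> hN; case: (extra_stepP t) => // hext.
by have [_ _ hsub _] := path_extra hN hext; rewrite /grows hsub.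
Qed.

Lemma path_stack_sub t t' : N <= t -> t <= t' ->
  (forall u, t <= u < t' -> ~~ grows u) -> Sq t' `<=` Sq t.
Proof.
move=> hN; elim: t' => [|t' IH]; first by rewrite leqn0 => /eqP ->.
rewrite leq_eqVlt => /orP[/eqP -> _ //|htt'] hflat.
have /negPn hsub : ~~ grows t' by apply: hflat; rewrite -ltnS htt' ltnSn.
apply: fsubset_trans hsub (IH _ _) => // u /andP[htu hut'].
by apply: hflat; rewrite htu ltnS ltnW.
Qed.

Lemma reset_grows r r' : N <= r -> r < r' -> extra_step r ->
  reset_step g (Bs r) (Bs r.+1) -> reset_step g (Bs r') (Bs r'.+1) ->
  exists2 t, r < t < r' & grows t.
Proof.
move=> hNr hrr' hext hres hres'; apply: NNPP => hnone.
have hN k : r <= k -> N <= k by move/(leq_trans hNr).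
have steady u : r <= u < r' -> ~~ grows u.
  case/andP; rewrite leq_eqVlt => /orP[/eqP <- _|hru hur'].
    by have [_ _ hsub _] := path_extra hNr hext; rewrite /grows hsub.
  by apply/negP => hgu; apply: hnone; exists u; rewrite ?hru.
have in_stack k d : r <= k <= r' -> d \in Sq r' -> d \in Sq k.
  case/andP=> hrk hkr'; apply/fsubsetP/(path_stack_sub (hN k hrk) hkr') => u.
  case/andP=> hku hur'.
  by apply: steady; rewrite hur' (leq_trans hrk hku).
have [hr'S hgr'] := path_gstack (hN r' (ltnW hrr')).
have [d hd hgd] : exists2 d, d \in Sq r' & index g (th r') < index d (th r').
  have [_ [hcov _]] := hres'; apply: NNPP => hno.
  apply: (hcov _ _ _ hr'S); split=> // d hd.
  by rewrite leqNgt; apply/negP => hlt; apply: hno; exists d.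
have hdg : index d (th r) <= index g (th r).
  have : d \in Sq r.+1 by apply: in_stack hd; rewrite leqnSn hrr'.
  have [_ _ _ /(_ hres) ->] := path_extra hNr hext.
  by case: (path_gstack hNr) => _ hgr; rewrite /trunc hgr inE => /andP[].
suff : index d (th r') <= index g (th r') by rewrite leqNgt hgd.
rewrite -(theta_order (ltnW hrr')) // => k hk.
have hNk := hN k (proj1 (andP hk)).
split; last exact: g_theta.
by case: (path_gstack hNk) => hS _; apply: stack_in_theta hS (in_stack k d hk hd).
Qed.

Lemma grows_infinite m : exists n, (m < n) && ((N <= io n) && grows (io n)).
Proof.
have [r [hr [hext hres]]] := g_resets (maxn (io m).+1 N).
have [r' [hr' [_ hres']]] := g_resets r.+1.
have hNr : N <= r := leq_trans (leq_maxr _ _) hr.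
have [t /andP[hrt htr'] hgt] := reset_grows hNr hr' hext hres hres'.
have hNt : N <= t := leq_trans hNr (ltnW hrt).
have [n hn] := grows_succ hNt hgt.
exists n; rewrite hn hNt hgt -(io_ltn m n) hn !andbT.
exact: ltn_trans (leq_trans (leq_maxl _ _) hr) hrt.
Qed.

Lemma io_next m : io m < io m.+1 <= io m.+1.
Proof. by rewrite io_ltn ltnSn leqnn. Qed.

Lemma path_idle m u : N <= io m -> io m < u <= io m.+1 ->
  xq u = xq (io m).+1 /\ aq u = aq (io m).+1.
Proof.
move=> hN; elim: u => [|u IH]; first by rewrite ltn0.
case/andP; rewrite ltnS leq_eqVlt => /orP[/eqP <- //|hmu] hu.
have [-> -> _ _] := path_extra (leq_trans hN (ltnW hmu)) (extra_between hmu hu).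
by apply: IH; rewrite hmu ltnW.
Qed.

Lemma path_label_Ppath n n' : N <= io n ->
  (forall m, n < m < n' -> ~~ grows (io m)) -> aq (io n).+1 = z0 ->
  forall m, n < m <= n' -> Ppath_or_id tau n.+1 m (xq (io n).+1) (aq (io m)) (xq (io m)).
Proof.
move=> hN hflat ha0; elim=> [|m IH] //.
case/andP; rewrite ltnS leq_eqVlt => /orP[/eqP <- _|hnm hmn'].
  by have [-> ->] := path_idle hN (io_next n); left.
have hNm : N <= io m by rewrite (leq_trans hN) // io_leq ltnW.
have [c [hm]] := path_succ hNm; rewrite (negbTE (hflat m _)) ?hnm // => ha.
have [-> ->] := path_idle hNm (io_next m).
right; split; first by rewrite ltnS.
by rewrite ha; apply: Ppath_snoc (IH _) hm; rewrite hnm ltnW.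
Qed.

Lemma path_trace : trace_condition tau.
Proof.
have [e he] := enum_infinite grows_infinite.
exists (fun j => (e j).+1), (fun j => xq (io (e j)).+1); split; [|split] => j.
- by have [_ ? _] := he j.
- have [/andP[hN _] _ _] := he j; have [c [hm _]] := path_succ hN.
  by rewrite -run_describes_path; exact: (mrel_sub hm).2.
have [/andP[hN hgr] hlt hgap] := he j; have [/andP[hN' hgr'] _ _] := he j.+1.
have [c [_]] := path_succ hN; rewrite hgr => -[_ ha0].
have hflat m : e j < m < e j.+1 -> ~~ grows (io m).
  move=> hm; have := hgap m hm; rewrite (leq_trans hN) // io_leq ltnW //.
  by case/andP: hm.
have hlast : e j < e j.+1 <= e j.+1 by rewrite hlt leqnn.
have hpath := path_label_Ppath hN hflat ha0 hlast.
have [c' [hm']] := path_succ hN'; rewrite hgr' => -[hjoin _].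
by rewrite -hjoin; exact: Ppath_snoc hpath hm'.
Qed.

End Path.
End GStacks.
End Run.

Theorem mainTheorem3 (V : choiceType) (A : activation_algebra) (C : countType)
    (emb : nat -> C) (emb_inj : injective emb)
    (M : seq (morph V A)) (tau : nat -> morph V A) :
  (forall n, Stdlib.Lists.List.In (tau n) M) ->
  (exists (Bs : nat -> board V A C) (iota : nat -> nat) (Xs : nat -> {fset V}),
      is_run tau Bs iota Xs /\ accepting Bs iota) ->
  describes_path tau /\ trace_condition tau.
Proof.
move=> _ [Bs [io [Xs [hrun [N [g [hgN hres]]]]]]].
split; first exact: run_describes_path hrun.
have [Q hQ] := lineage_path hrun hgN.
exact (path_trace hrun hgN hres hQ).
Qed.
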